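(* Let $(m_n)$ be a sequence of positive integers and $V_n\subseteq GF(2)^{m_n}$ linear subspaces. If $|\mathcal{A}_1(V_n)|\to\infty$ as $n\to\infty$, then the sequence $(V_n)$ has a uniform weight spectrum.
   Context: The weight ${\rm wt}(x)$ of $x\in GF(2)^m$ is the number of nonzero coordinates; for $W\subseteq GF(2)^m$, $\mathcal{A}_i(W)=\{x\in W:{\rm wt}(x)=i\}$. For a linear subspace $V\subseteq GF(2)^m$ let $\alpha(V)=\max_{i,\,x}\frac{|\mathcal{A}_i(V+x)|}{|V|}$, the maximum over all $i$ and all $x\in GF(2)^m$. A sequence of subspaces $V_n\subseteq GF(2)^{m_n}$ has a uniform weight spectrum if $\alpha(V_n)\to0$ as $n\to\infty$. *)

From HB Require Import structures.
From mathcomp Require Import all_boot all_order all_algebra.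
Set Implicit Arguments. Unset Strict Implicit. Unset Printing Implicit Defensive.
Import Order.TTheory GRing.Theory Num.Theory.
Local Open Scope ring_scope.

Definition wt (m : nat) (x : 'rV['F_2]_m) : nat := #|[set j | x 0 j != 0]|.

Definition cosetA (m : nat) (V : {vspace 'rV['F_2]_m}) (x : 'rV['F_2]_m) (i : nat) : nat :=
  #|[set y : 'rV['F_2]_m | (y - x \in V) && (wt y == i)]|.

Definition A (m : nat) (V : {vspace 'rV['F_2]_m}) (i : nat) : nat := cosetA V 0 i.

Definition card_vs (m : nat) (V : {vspace 'rV['F_2]_m}) : nat :=
  #|[set y : 'rV['F_2]_m | y \in V]|.

(* alpha(V) = max_{i, x} |A_i(V+x)| / |V|  (as a rational number).
   Weights lie in 0..m, so ranging i over 'I_(m.+1) covers all nonzero terms. *)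
Definition alpha (m : nat) (V : {vspace 'rV['F_2]_m}) : rat :=
  \big[Num.max/0]_(i < m.+1) \big[Num.max/0]_(x : 'rV['F_2]_m)
     ((cosetA V x i)%:R / (card_vs V)%:R).

Definition uniform_weight_spectrum (m : nat -> nat)
  (V : forall n, {vspace 'rV['F_2]_(m n)}) : Prop :=
  forall eps : rat, 0 < eps -> exists N, forall n, (N <= n)%N -> `|alpha (V n)| < eps.

(* Suppose V contains the unit vectors e_j for all j in a set S of 2n
   coordinates.  Then every coset V + x is a union of classes of vectors that
   agree outside S (the fibers of zeroing the coordinates in S); each class has
   2^(2n) elements, and on a class the weight is a constant plus the weight of
   the restriction to S, so at most binom(2n, n) of its elements have any given
   weight.  Hence alpha(V) <= binom(2n, n) / 4^n <= 1 / sqrt(2n + 1).  The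
   weight-one vectors of V are exactly the unit vectors it contains, so when
   |A_1(V_n)| -> oo, n can be taken arbitrarily large. *)

From mathcomp Require Import all_boot all_order all_algebra.
From mathcomp Require Import zify ring.

Set Implicit Arguments. Unset Strict Implicit. Unset Printing Implicit Defensive.
Import Order.TTheory GRing.Theory Num.Theory.

Lemma leq_binS N j : j.*2 < N -> 'C(N, j) <= 'C(N, j.+1).
Proof.
move=> ltjN; rewrite -(@leq_pmul2l j.+1) // mul_bin_left.
by apply: leq_mul => //; lia.
Qed.

Lemma leq_bin_central n j : 'C(n.*2, j) <= 'C(n.*2, n).
Proof.
wlog le_jn : j / j <= n.
  move=> le_central; case: (leqP j n) => [/le_central //|lt_nj].
  have [le_j2n|lt_2nj] := leqP j n.*2; last by rewrite bin_small.
  by rewrite -bin_sub //; apply: le_central; lia.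
have bin_up : {in [pred i | i <= n] &,
    {homo (fun i => 'C(n.*2, i)) : i k / i <= k}}.
  apply: homo_leq_in => [//|i k l|i k|i _]; rewrite ?inE.
  - exact: leq_trans.
  - move=> _ le_kn l /andP[_ lt_lk]; exact: ltnW (leq_trans lt_lk le_kn).
  - by move=> lt_in; apply: leq_binS; lia.
by apply: bin_up; rewrite ?inE.
Qed.

Lemma central_binS n : n.+1 * 'C(n.+1.*2, n.+1) = 2 * n.*2.+1 * 'C(n.*2, n).
Proof.
have sym : 'C(n.*2.+1, n.+1) = 'C(n.*2.+1, n).
  rewrite -bin_sub; last by lia.
  by congr 'C(_, _); lia.
rewrite doubleS binS -sym mulnDr -mul_bin_diag /=.
by rewrite addnn -mul2n mulnA.
Qed.

Lemma central_bin_sqr_le n : 'C(n.*2, n) ^ 2 * n.*2.+1 <= 16 ^ n.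
Proof.
elim: n => [//|n IH]; set c := 'C(n.*2, n) in IH *.
rewrite -(@leq_pmul2l (n.+1 ^ 2)) ?expn_gt0 // mulnA -expnMn central_binS.
have ratio : (2 * n.*2.+1) ^ 2 * n.+1.*2.+1 <= 16 * n.+1 ^ 2 * n.*2.+1 by nia.
apply: (@leq_trans (16 * n.+1 ^ 2 * n.*2.+1 * c ^ 2)).
  by rewrite expnMn mulnAC leq_mul2r ratio orbT.
have -> : 16 * n.+1 ^ 2 * n.*2.+1 * c ^ 2 = n.+1 ^ 2 * (16 * (c ^ 2 * n.*2.+1)).
  by ring.
by rewrite [16 ^ _]expnS leq_pmul2l ?expn_gt0 // leq_pmul2l.
Qed.

Lemma card_fibers_le (T T' : finType) (f : T -> T') (A : {set T}) (P : pred T)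
    (s b : nat) :
  {in A, forall y, #|[set y' in A | f y' == f y]| = s} ->
  {in A, forall y, #|[set y' in A | (f y' == f y) && P y']| <= b} ->
  #|[set y in A | P y]| * s <= #|A| * b.
Proof.
move=> card_fib card_fibP.
have sum_fibers (Q : pred T) :
    #|[set y in A | Q y]| = \sum_(c in f @: A) #|[set y in A | (f y == c) && Q y]|.
  rewrite -sum1_card (eq_bigl (fun y => (y \in A) && Q y)) => [|y]; last first.
    by rewrite inE.
  rewrite (partition_big f (mem (f @: A))) => [|y /andP[yA _]]; last exact: imset_f.
  apply: eq_big => [//|c _]; rewrite -sum1_card; apply: eq_bigl => y.
  by rewrite !inE -!andbA [Q y && _]andbC.
have cardA : #|A| = #|f @: A| * s.
  rewrite -sum_nat_const (eq_card (B := [set y in A | true])) => [|y]; last first.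
    by rewrite inE andbT.
  rewrite sum_fibers; apply: eq_bigr => _ /imsetP[y yA ->].
  by rewrite -(card_fib y yA); apply: eq_card => y'; rewrite !inE andbT.
have cardAP : #|[set y in A | P y]| <= #|f @: A| * b.
  rewrite -sum_nat_const sum_fibers; apply: leq_sum => _ /imsetP[y yA ->].
  exact: card_fibP.
by rewrite cardA mulnAC leq_mul2r cardAP orbT.
Qed.

Lemma exists_subset_card (T : finType) (A : {set T}) (k : nat) :
  k <= #|A| -> exists2 S : {set T}, S \subset A & #|S| = k.
Proof.
rewrite -(bin_gt0 _ k) -cards_draws => /card_gt0P[S].
by rewrite inE => /andP[sSA /eqP cardS]; exists S.
Qed.

Local Open Scope ring_scope.

Lemma lt_of_sqr_mul_le1 (R : realFieldType) (r eps : R) (n : nat) :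
  0 < eps -> eps ^- 2 < n%:R -> r ^+ 2 * n%:R <= 1 -> r < eps.
Proof.
move=> eps_gt0 lt_n le_1; rewrite ltNge; apply/negP => le_eps_r.
have : eps ^+ 2 * n%:R <= 1.
  apply: le_trans le_1; rewrite ler_wpM2r // ler_pXn2r ?nnegrE //.
  - exact: ltW.
  - exact: le_trans (ltW eps_gt0) le_eps_r.
have eps2_gt0 : 0 < eps ^+ 2 by rewrite exprn_gt0.
rewrite -(ltr_pM2l eps2_gt0) mulrV ?unitfE ?gt_eqF // in lt_n.
by rewrite leNgt lt_n.
Qed.

Lemma central_bin_ratio_sqr_le (R : realFieldType) (n : nat) :
  ('C(n.*2, n)%:R / (2 ^ n.*2)%:R : R) ^+ 2 * n%:R <= 1.
Proof.
rewrite expr_div_n mulrAC ler_pdivrMr ?exprn_gt0 ?ltr0n ?expn_gt0 // mul1r.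
rewrite -!natrX -natrM ler_nat -expnM (_ : n.*2 * 2 = 4 * n)%N; last by lia.
rewrite expnM; apply: leq_trans (central_bin_sqr_le n).
by rewrite leq_mul2l; apply/orP; right; lia.
Qed.

Definition patch (R : nzRingType) (m : nat) (S U : {set 'I_m}) (z : 'rV[R]_m) :
    'rV[R]_m :=
  \row_l (if l \in S then (l \in U)%:R else z 0 l).

Lemma memv_patch_sub (K : fieldType) (m : nat) (V : {vspace 'rV[K]_m})
    (S U : {set 'I_m}) (z : 'rV[K]_m) :
  {in S, forall j, delta_mx 0 j \in V} -> patch S U z - z \in V.
Proof.
move=> SV.
have -> : patch S U z - z = \sum_(j in S) ((j \in U)%:R - z 0 j) *: delta_mx 0 j.
  apply/rowP => l; rewrite !mxE summxE.
  under eq_bigr do rewrite !mxE /= mulr_natr mulrb.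
  rewrite -big_mkcondr; case: ifP => lS.
    rewrite (big_pred1 l) // => k /=.
    by rewrite eq_sym; case: eqP => [->|]; rewrite ?lS ?andbF.
  by rewrite subrr big_pred0 // => k; case: eqP => [<-|]; rewrite ?lS ?andbF.
by apply: memv_suml => j jS; rewrite memvZ ?SV.
Qed.

Lemma F2_natr (a : 'F_2) : a = (a != 0)%:R.
Proof. by case: a => [[|[|k]] Hk]; apply/val_inj. Qed.

Section PatchF2.
Variables (m : nat) (S : {set 'I_m}).
Implicit Types (U : {set 'I_m}) (z : 'rV['F_2]_m).

Definition supp_in z := [set l in S | z 0 l != 0].

Lemma patch_supp z : patch S (supp_in z) z = z.
Proof.
apply/rowP => l; rewrite mxE inE.
by case: ifP => //= ->; rewrite -F2_natr.
Qed.

Lemma patchK U U' z : patch S U' (patch S U z) = patch S U' z.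
Proof. by apply/rowP => l; rewrite !mxE; case: (l \in S). Qed.

Lemma supp_in_patch U z : U \subset S -> supp_in (patch S U z) = U.
Proof.
move=> sUS; apply/setP => l; rewrite !inE mxE.
case: (boolP (l \in S)) => [_|lNS] /=; first by case: (l \in U); rewrite ?oner_eq0.
by apply/esym/(contraNF (subsetP sUS l)).
Qed.

Lemma wt_patch U z :
  U \subset S -> wt (patch S U z) = (wt (patch S set0 z) + #|U|)%N.
Proof.
move=> sUS.
have suppE :
    [set l | patch S U z 0 l != 0] = [set l | patch S set0 z 0 l != 0] :|: U.
  apply/setP => l; rewrite !inE !mxE in_set0.
  case: (boolP (l \in S)) => [_|lNS] /=; first by case: (l \in U); rewrite ?oner_eq0.
  by rewrite (contraNF (subsetP sUS l)) ?orbF.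
rewrite /wt suppE cardsU (_ : _ :&: U = set0) ?cards0 ?subn0 //.
apply/setP => l; rewrite !inE !mxE in_set0.
by case: (boolP (l \in U)) => lU; rewrite ?andbF // (subsetP sUS l lU) eqxx.
Qed.

End PatchF2.

Lemma row_delta_inj (R : nzRingType) (n : nat) :
  injective (fun j : 'I_n => delta_mx 0 j : 'rV[R]_n).
Proof.
move=> j k /rowP/(_ j); rewrite !mxE !eqxx /=.
by case: (j =P k) => // _ /eqP; rewrite oner_eq0.
Qed.

Lemma wt_eq1P (m : nat) (y : 'rV['F_2]_m) :
  reflect (exists j, y = delta_mx 0 j) (wt y == 1)%N.
Proof.
apply: (iffP cards1P) => [[j suppE]|[j ->]]; exists j.
  apply/rowP => l; rewrite [LHS]F2_natr mxE eqxx /=.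
  by move/setP/(_ l): suppE; rewrite !inE => ->.
by apply/setP => l; rewrite !inE mxE eqxx /=; case: (l == j); rewrite ?oner_eq0.
Qed.

Lemma A1E (m : nat) (V : {vspace 'rV['F_2]_m}) :
  A V 1 = #|[set j | delta_mx 0 j \in V]|.
Proof.
rewrite /A /cosetA -(card_imset _ (@row_delta_inj 'F_2 m)); apply: eq_card => y.
rewrite inE subr0; apply/andP/imsetP => [[yV /wt_eq1P[j def_y]]|[j]].
  by exists j; rewrite // inE -def_y.
by rewrite inE => jV ->; split => //; apply/wt_eq1P; exists j.
Qed.

Lemma card_vs_coset (m : nat) (V : {vspace 'rV['F_2]_m}) (x : 'rV['F_2]_m) :
  #|[set y | y - x \in V]| = card_vs V.
Proof.
have -> : [set y | y - x \in V] = [set y + x | y in [set y | y \in V]].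
  apply/setP => y; rewrite inE; apply/idP/imsetP => [yV|[y' /[!inE] y'V ->]].
    by exists (y - x); rewrite ?inE ?subrK.
  by rewrite addrK.
by rewrite card_imset //; apply: addIr.
Qed.

Section CosetFibers.
Variables (m : nat) (V : {vspace 'rV['F_2]_m}) (S : {set 'I_m}).
Hypothesis SV : {in S, forall j, delta_mx 0 j \in V}.
Variable x : 'rV['F_2]_m.

Let C := [set y : 'rV['F_2]_m | y - x \in V].

Lemma patch_coset U y : (patch S U y - x \in V) = (y - x \in V).
Proof. by rewrite -[patch S U y](subrK y) -addrA rpredDl ?memv_patch_sub. Qed.

Lemma patch_fiber y : y \in C ->
  [set y' in C | patch S set0 y' == patch S set0 y]
    = (fun U => patch S U y) @: powerset S.
Proof.
rewrite inE => yC; apply/setP => y'; rewrite !inE.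
apply/andP/imsetP => [[_ /eqP fib]|[U _ ->]].
  exists (supp_in S y').
    by rewrite inE; apply/subsetP => l; rewrite inE => /andP[].
  by rewrite -{1}(patch_supp S y') -(patchK S set0) fib patchK.
by rewrite patch_coset patchK.
Qed.

Lemma card_patch_fiber y : y \in C ->
  #|[set y' in C | patch S set0 y' == patch S set0 y]| = (2 ^ #|S|)%N.
Proof.
move=> yC; rewrite patch_fiber // card_in_imset ?card_powerset //.
move=> U U' /[!inE] sUS sU'S eqUU'.
by rewrite -(supp_in_patch y sUS) eqUU' supp_in_patch.
Qed.

Lemma card_patch_fiber_wt y i : y \in C ->
  (#|[set y' in C | (patch S set0 y' == patch S set0 y) && (wt y' == i)]|
     <= 'C(#|S|, i - wt (patch S set0 y)))%N.
Proof.
move=> yC; rewrite -cards_draws.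
apply: leq_trans (leq_imset_card (fun U => patch S U y) _).
apply/subset_leq_card/subsetP => y' /[!inE] /and3P[y'C fib /eqP wt_y'].
have : y' \in [set y' in C | patch S set0 y' == patch S set0 y].
  by rewrite !inE y'C fib.
rewrite patch_fiber // => /imsetP[U /[!inE] sUS def_y'].
apply/imsetP; exists U => //.
by rewrite inE sUS -wt_y' def_y' wt_patch //= addKn.
Qed.

Lemma cosetA_mul_le (b : nat) : (forall j, 'C(#|S|, j) <= b)%N ->
  forall i, (cosetA V x i * 2 ^ #|S| <= card_vs V * b)%N.
Proof.
move=> le_b i; rewrite -(card_vs_coset V x).
rewrite (_ : cosetA V x i = #|[set y in C | wt y == i]|); last first.
  by apply: eq_card => y; rewrite !inE.
rewrite -/C.
apply: (@card_fibers_le _ _ (patch S set0) C (fun y => wt y == i)) => y yC.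
  exact: card_patch_fiber.
exact: leq_trans (card_patch_fiber_wt i yC) (le_b _).
Qed.

End CosetFibers.

Lemma card_vs_gt0 (m : nat) (V : {vspace 'rV['F_2]_m}) : (0 < card_vs V)%N.
Proof. by apply/card_gt0P; exists 0; rewrite inE mem0v. Qed.

Lemma alpha_ge0 (m : nat) (V : {vspace 'rV['F_2]_m}) : 0 <= alpha V.
Proof.
apply: le_trans (le_bigmax _ _ ord0); apply: le_trans (le_bigmax _ _ 0).
by rewrite divr_ge0.
Qed.

Lemma alpha_le (m : nat) (V : {vspace 'rV['F_2]_m}) (S : {set 'I_m}) (b : nat) :
  {in S, forall j, delta_mx 0 j \in V} -> (forall j, 'C(#|S|, j) <= b)%N ->
  alpha V <= b%:R / (2 ^ #|S|)%:R.
Proof.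
move=> SV le_b; have b_ge0 : 0 <= b%:R / (2 ^ #|S|)%:R :> rat by rewrite divr_ge0.
apply: bigmax_le => // i _; apply: bigmax_le => // x _.
rewrite ler_pdivrMr ?ltr0n ?card_vs_gt0 // mulrAC ler_pdivlMr ?ltr0n ?expn_gt0 //.
by rewrite -!natrM ler_nat [(b * _)%N]mulnC cosetA_mul_le.
Qed.

Theorem corollary2 (m : nat -> nat) (V : forall n, {vspace 'rV['F_2]_(m n)}) :
  (forall n, (0 < m n)%N) ->
  (forall M : nat, exists N, forall n, (N <= n)%N -> (M <= A (V n) 1)%N) ->
  uniform_weight_spectrum V.
Proof.
move=> _ A1_unbounded eps eps_gt0.
have [n eps_lt_n] : exists n : nat, eps ^- 2 < n%:R.
  exists (Num.Def.archi_bound (eps ^- 2)).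
  by rewrite archi_boundP ?invr_ge0 ?exprn_ge0 ?ltW.
have [N le_A1] := A1_unbounded n.*2; exists N => k le_Nk.
have := le_A1 k le_Nk; rewrite A1E => /exists_subset_card[S sS_units cardS].
have SV : {in S, forall j, delta_mx 0 j \in V k}.
  by move=> j /(subsetP sS_units); rewrite inE.
have le_central j : ('C(#|S|, j) <= 'C(n.*2, n))%N by rewrite cardS leq_bin_central.
rewrite ger0_norm ?alpha_ge0 //; apply: le_lt_trans (alpha_le SV le_central) _.
by rewrite cardS; apply: lt_of_sqr_mul_le1 eps_lt_n (central_bin_ratio_sqr_le _ n).
Qed.
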